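(* Under Assumption 1, for every $i\in M$ and admissible profile $a=(a_i,a_{-i})$: (1) for $j\ne i$, $D_{j,i}(a)$ depends only on $a_{-i}$; (2) $D_{i,i}(a)=\tilde a_{i,i}+\sum_{k\in M\setminus\{i\}}\tilde a_{k,i}D_{k,i}(a_{-i})<1$; (3) $$\pi_i(a)=\varepsilon_i\,\frac{a_{0,i}+\sum_{j\in M\setminus\{i\}}a_{0,j}D_{j,i}(a_{-i})}{1-\tilde a_{i,i}-\sum_{k\in M\setminus\{i\}}\tilde a_{k,i}D_{k,i}(a_{-i})};$$ (4) $\pi_i$ is continuous and quasi-concave in $a_i\in S_i(b)$.
   Context: Household $0$, firms $M$, $N=M\cup\{0\}$; sectors with $M_0=\{0\}$ (labor) and $M_\ell$ the firms of sector $\ell$. Consumption shares $a_0\in\mathbb{R}^M_{++}$ summing to $1$; firm $i$ has requirements $b_i\ge0$, $\sum_\ell b_{i,\ell}\le1$, $b_{i,0}>0$, and strategy set $S_i(b)=\{a_i\in\mathbb{R}^N_+:\sum_{j\in M_\ell}a_{i,j}=b_{i,\ell}\ \forall\ell\}$; $\varepsilon_i=1-\sum_\ell b_{i,\ell}$. Equilibrium profit $\pi_i(a)=\varepsilon_i\bar v_i$, where $\bar v$ solves $\bar v_j=a_{0,j}+a_{0,j}\sum_i\varepsilon_i\bar v_i+\sum_ia_{i,j}\bar v_i$ ($j\in M$), $\sum_ia_{i,0}\bar v_i=1$. For $i,j\in M$, $\tilde a_{j,i}:=a_{i,j}+\varepsilon_ia_{0,j}$. A walk $(h_1,\dots,h_k)\in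 M^k$ has weight $\prod_{t=1}^{k-1}\tilde a_{h_{t+1},h_t}$. A direct walk from $j$ to $i$ is a walk with $k\ge2$, $h_1=j$, $h_k=i$ and $h_t\ne i$ for $2\le t\le k-1$; a direct walk from $i$ to $i$ is a direct cycle. $D_{j,i}(a)$ is the sum of weights of direct walks from $j$ to $i$ (for $j=i$: of direct cycles around $i$). Assumption 1: $a_0\in\mathbb{R}^M_{++}$, $b_{i,0}>0$ for all $i$, some firm has a positive non-labor requirement. *)

From HB Require Import structures.
From mathcomp Require Import all_boot all_order all_algebra.
From mathcomp Require Import all_classical all_reals all_analysis.
From Stdlib Require Import ClassicalEpsilon.
Set Implicit Arguments. Unset Strict Implicit. Unset Printing Implicit Defensive.
Import Order.TTheory GRing.Theory Num.Theory.
Import numFieldNormedType.Exports.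
Local Open Scope ring_scope.

(* Firms: M = 'I_m.  Agents/goods: N = 'I_m.+1, where ord0 is the household
   (labor, index 0) and firm k : 'I_m is identified with [lift ord0 k].
   Sectors: 'I_L.+1, sector ord0 being labor (M_0 = {0});
   [sec : 'I_m.+1 -> 'I_L.+1] assigns each element of N to its sector,
   so M_l = [pred j | sec j == l].
   a0 : 'I_m -> R   household consumption shares.
   b  : 'I_m -> 'I_L.+1 -> R   requirements b_{i,l}.
   A profile is a : 'I_m -> 'rV[R]_(m.+1); a i = a_i in R^N,
   a_{i,j} = a i 0 (lift ord0 j) for j in M and a_{i,0} = a i 0 ord0. *)

Section Model.
Variables (R : realType) (m L : nat).
Variable (sec : 'I_m.+1 -> 'I_L.+1).
Variables (a0 : 'I_m -> R) (b : 'I_m -> 'I_L.+1 -> R).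

Definition firm (j : 'I_m) : 'I_m.+1 := lift ord0 j.

Definition strat (i : 'I_m) : set 'rV[R]_(m.+1) :=
  [set x | (forall j, 0 <= x 0 j) /\
           (forall l : 'I_L.+1, \sum_(j | sec j == l) x 0 j = b i l)]%classic.

Definition admissible (a : 'I_m -> 'rV[R]_(m.+1)) : Prop :=
  forall i, strat i (a i).

Definition eps (i : 'I_m) : R := 1 - \sum_(l : 'I_L.+1) b i l.

Definition upd (a : 'I_m -> 'rV[R]_(m.+1)) (i : 'I_m) (x : 'rV[R]_(m.+1)) :
  'I_m -> 'rV[R]_(m.+1) := fun k => if k == i then x else a k.

Definition atil (a : 'I_m -> 'rV[R]_(m.+1)) (j i : 'I_m) : R :=
  a i 0 (firm j) + eps i * a0 j.

(* Weight of a walk (h_1,...,h_k) with k = n.+2, given as w : 'I_(n.+2) -> 'I_m: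
   prod_{t=1}^{k-1} atil h_{t+1} h_t. *)
Definition walk_weight (a : 'I_m -> 'rV[R]_(m.+1)) (n : nat)
    (w : {ffun 'I_(n.+2) -> 'I_m}) : R :=
  \prod_(t < n.+1) atil a (w (lift ord0 t)) (w (widen_ord (leqnSn n.+1) t)).

Definition direct_walk (j i : 'I_m) (n : nat) (w : {ffun 'I_(n.+2) -> 'I_m}) : bool :=
  [&& w ord0 == j, w ord_max == i &
      [forall t : 'I_(n.+2), ((0 < t)%N && (t < n.+1)%N) ==> (w t != i)]].

Definition Dlen (a : 'I_m -> 'rV[R]_(m.+1)) (j i : 'I_m) (n : nat) : R :=
  \sum_(w : {ffun 'I_(n.+2) -> 'I_m} | direct_walk j i w) walk_weight a w.

Definition D (a : 'I_m -> 'rV[R]_(m.+1)) (j i : 'I_m) : \bar R :=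
  (\sum_(n <oo) (Dlen a j i n)%:E)%E.

Definition eq_values (a : 'I_m -> 'rV[R]_(m.+1)) (v : 'I_m -> R) : Prop :=
  (forall j : 'I_m,
      v j = a0 j + a0 j * (\sum_(i : 'I_m) eps i * v i)
            + \sum_(i : 'I_m) a i 0 (firm j) * v i) /\
  \sum_(i : 'I_m) a i 0 ord0 * v i = 1.

Definition vbar (a : 'I_m -> 'rV[R]_(m.+1)) : 'I_m -> R :=
  epsilon (inhabits (fun _ => 0)) (eq_values a).

Definition profit (a : 'I_m -> 'rV[R]_(m.+1)) (i : 'I_m) : R := eps i * vbar a i.

End Model.

Definition quasi_concave_on (R : realType) (n : nat)
    (S : set 'rV[R]_n) (f : 'rV[R]_n -> R) : Prop :=
  forall x y (t : R), S x -> S y -> 0 <= t -> t <= 1 ->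
    Num.min (f x) (f y) <= f (t *: x + (1 - t) *: y).

From HB Require Import structures.
From mathcomp Require Import all_boot all_order all_algebra.
From mathcomp Require Import all_classical all_reals all_analysis.
From mathcomp Require Import ring lra.
From Stdlib Require Import ClassicalEpsilon.
Set Implicit Arguments. Unset Strict Implicit. Unset Printing Implicit Defensive.
Import Order.TTheory GRing.Theory Num.Theory.
Import numFieldNormedType.Exports.
Local Open Scope ring_scope.

(* A direct walk from j to i is either the edge j -> i or an edge j -> k with
   k != i followed by a direct walk from k to i, so
   D_{j,i} = atil_{i,j} + sum_{k != i} atil_{k,j} D_{k,i}.  For j != i this
   recursion never reads the column atil_{_,i}, the only place where a_i enters;
   this is (1), and for j = i it is (2).  Every column of atil sums to
   1 - b_{j,0} < 1, which bounds the partial sums of D_{j,i} by 1 - b_{j,0}.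
   Writing the equilibrium system as v = a_0 + atil^T v and eliminating the v_j,
   j != i, with the weights D_{j,i} gives
   (1 - D_{i,i}) v_i = a_{0,i} + sum_{j != i} a_{0,j} D_{j,i}, which is (3).
   Hence, as a function of a_i, the profit is c / f(a_i) with c >= 0 and f
   affine and positive on S_i(b), whence (4). *)

Section DirectWalks.
Variables (R : realType) (m L : nat) (a0 : 'I_m -> R) (b : 'I_m -> 'I_L.+1 -> R)
  (a : 'I_m -> 'rV[R]_(m.+1)).

Definition walk_cons n (j : 'I_m) (u : {ffun 'I_n.+2 -> 'I_m}) : {ffun 'I_n.+3 -> 'I_m} :=
  [ffun t : 'I_n.+3 => if nat_of_ord t is s.+1 then u (inord s) else j].

Definition walk_behead n (w : {ffun 'I_n.+3 -> 'I_m}) : {ffun 'I_n.+2 -> 'I_m} :=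
  [ffun t => w (lift ord0 t)].

Lemma walk_behead_cons n j u : walk_behead (@walk_cons n j u) = u.
Proof. by apply/ffunP => t; rewrite !ffunE lift0 /= inord_val. Qed.

Lemma walk_cons_behead n j (w : {ffun 'I_n.+3 -> 'I_m}) :
  w ord0 = j -> walk_cons j (walk_behead w) = w.
Proof.
move=> w0; apply/ffunP => t; rewrite !ffunE.
case: t => [[|s] Hs] /=; first by rewrite -w0; congr (w _); apply: val_inj.
by rewrite ffunE; congr (w _); apply: val_inj; rewrite /= inordK.
Qed.

Lemma walk_cons0 n j u : @walk_cons n j u ord0 = j.
Proof. by rewrite ffunE. Qed.

Lemma walk_consS n j u (s : 'I_n.+2) : @walk_cons n j u (lift ord0 s) = u s.
Proof. by rewrite ffunE lift0 inord_val. Qed.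

Lemma walk_cons_max n j u : @walk_cons n j u ord_max = u ord_max.
Proof. by rewrite -(walk_consS j u); congr (_ _); apply: val_inj. Qed.

Lemma direct_walk_cons n j i k (u : {ffun 'I_n.+2 -> 'I_m}) :
  direct_walk j i (walk_cons j u) && (walk_cons j u (lift ord0 ord0) == k) =
  (k != i) && direct_walk k i u.
Proof.
rewrite /direct_walk walk_cons0 walk_cons_max walk_consS eqxx.
case E0: (u ord0 == k); last by rewrite andbF andFb andbF.
move/eqP: E0 => E0; rewrite andbT andTb.
apply/idP/idP.
- move=> /andP[-> /forallP inner].
  have := inner (lift ord0 ord0); rewrite walk_consS E0 => /implyP -> //.
  rewrite !andTb; apply/forallP => t; apply/implyP => /andP[t0 tn].
  have := inner (lift ord0 t); rewrite walk_consS => /implyP; apply.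
  by rewrite lift0 ltn0Sn ltnS tn.
- move=> /and4P[ki _ -> /forallP inner]; rewrite andTb.
  apply/forallP => t; apply/implyP.
  have [->|/negbTE t0] := eqVneq t ord0; first by rewrite ltnn.
  move=> /andP[tpos tn].
  have -> : t = lift ord0 (inord t.-1 : 'I_n.+2).
    apply: val_inj; rewrite /= inordK; first by rewrite /bump leq0n add1n prednK.
    exact: leq_ltn_trans (leq_pred t) tn.
  rewrite walk_consS.
  have [->|Hn] := eqVneq (inord t.-1 : 'I_n.+2) ord0; first by rewrite E0.
  apply: (implyP (inner (inord t.-1))); rewrite lt0n; apply/andP; split.
    by apply: contra Hn => /eqP E; apply/eqP/val_inj.
  by rewrite inordK -ltnS prednK // ltnW.
Qed.

Lemma Dlen0 j i : Dlen a0 b a j i 0 = atil a0 b a i j.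
Proof.
rewrite /Dlen (big_pred1 [ffun t : 'I_2 => if nat_of_ord t is 0 then j else i]).
  by rewrite /walk_weight big_ord1 !ffunE.
move=> w; rewrite /direct_walk /=; apply/idP/eqP.
- move=> /and3P[/eqP w0 /eqP w1 _]; apply/ffunP => t; rewrite ffunE.
  case: t => [[|[|s]] Hs] //=.
  + by rewrite -w0; congr (w _); apply: val_inj.
  + by rewrite -w1; congr (w _); apply: val_inj.
- move=> ->; apply/and3P; split; rewrite ?ffunE //.
  by apply/forallP => t; apply/implyP; case: t => [[|[|s]] Hs].
Qed.

Lemma DlenS j i n :
  Dlen a0 b a j i n.+1 = \sum_(k | k != i) atil a0 b a k j * Dlen a0 b a k i n.
Proof.
rewrite /Dlen (partition_big (fun w : {ffun 'I_n.+3 -> 'I_m} => w (lift ord0 ord0)) predT) //=.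
rewrite [RHS]big_mkcond /=; apply: eq_bigr => k _.
rewrite (reindex_onto (@walk_cons n j) (@walk_behead n)); last first.
  by move=> w /andP[/and3P[/eqP w0 _ _] _]; rewrite walk_cons_behead.
under eq_bigl => u do rewrite walk_behead_cons eqxx andbT direct_walk_cons.
case: ifP => ki /=; last by rewrite big_pred0.
rewrite mulr_sumr; apply: eq_bigr => u /and3P[/eqP u0 _ _].
rewrite /walk_weight big_ord_recl.
have -> : widen_ord (leqnSn n.+2) ord0 = ord0 :> 'I_n.+3 by apply: val_inj.
rewrite walk_consS walk_cons0 u0; congr (_ * _); apply: eq_bigr => t _.
have -> : widen_ord (leqnSn n.+2) (lift ord0 t) = lift ord0 (widen_ord (leqnSn n.+1) t).
  by apply: val_inj.
by rewrite !walk_consS.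
Qed.

End DirectWalks.

Section LinearSystems.
Variables (R : realFieldType) (m : nat).

(* Elimination of the unknowns v_j, j != i: the d_j play the role of the
   first-passage sums D_{j,i}, and summing v_j = c_j + sum_k t_{j,k} v_k
   against them telescopes. *)
Lemma first_passage_elimination (t : 'I_m -> 'I_m -> R) (c v d : 'I_m -> R) i :
  (forall j, v j = c j + \sum_k t j k * v k) ->
  (forall j, d j = t i j + \sum_(k | k != i) t k j * d k) ->
  (1 - d i) * v i = c i + \sum_(j | j != i) c j * d j.
Proof.
move=> hv hd.
have cd_v : \sum_j c j * d j = \sum_j v j * d j - \sum_k v k * \sum_j t j k * d j.
  under eq_bigr => j _ do rewrite (_ : c j = v j - \sum_k t j k * v k) ?[in RHS](hv j) ?addrK //.
  under eq_bigr => j _ do rewrite mulrBl mulr_suml.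
  rewrite sumrB; congr (_ - _); rewrite exchange_big /=; apply: eq_bigr => k _.
  rewrite mulr_sumr; apply: eq_bigr => j _; ring.
have td k : \sum_j t j k * d j = t i k * d i + d k - t i k.
  by rewrite (bigD1 i) //= (hd k); ring.
have cd : \sum_j c j * d j = (1 - d i) * (v i - c i).
  rewrite cd_v; under [X in _ - X]eq_bigr => k _ do rewrite td.
  rewrite [in RHS](hv i) [c i + _]addrC addrK mulr_sumr -sumrB.
  by apply: eq_bigr => k _; ring.
move: cd; rewrite (bigD1 i) //= => cd.
have -> : \sum_(j | j != i) c j * d j = (1 - d i) * (v i - c i) - c i * d i.
  by rewrite -cd; ring.
ring.
Qed.

(* The kernel of 1 - t^T is trivial: for u = u t^T, summing |u| along columns
   gives sum_k |u_k| (1 - colsum_k) <= 0. *)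
Lemma substochastic_fixpoint (t : 'I_m -> 'I_m -> R) (c : 'I_m -> R) :
  (forall j k, 0 <= t j k) -> (forall k, \sum_j t j k < 1) ->
  exists v : 'I_m -> R, forall j, v j = c j + \sum_k t j k * v k.
Proof.
move=> t_ge0 col_lt1.
pose A : 'M[R]_m := 1%:M - \matrix_(k, j) t j k.
have detA : \det A != 0.
  apply/negP => /det0P [u u0 uA].
  have hu j : u 0 j = \sum_k u 0 k * t j k.
    have := congr1 (fun M : 'rV[R]_m => M 0 j) uA.
    rewrite /A mulmxBr mulmx1 !mxE => /eqP; rewrite subr_eq0 => /eqP ->.
    by apply: eq_bigr => k _; rewrite !mxE.
  have le0 : \sum_k `|u 0 k| * (1 - \sum_j t j k) <= 0.
    under eq_bigr => k _ do rewrite mulrBr mulr1 mulr_sumr.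
    rewrite sumrB subr_le0 exchange_big /=; apply: ler_sum => j _.
    rewrite hu; apply: le_trans (ler_norm_sum _ _ _) _; apply: ler_sum => k _.
    by rewrite normrM (ger0_norm (t_ge0 _ _)) mulrC.
  have term_ge0 k : 0 <= `|u 0 k| * (1 - \sum_j t j k).
    by rewrite mulr_ge0 // subr_ge0 ltW.
  move/negP: u0; apply; apply/eqP/matrixP => r k; rewrite (ord1 r) mxE.
  have /eqP : `|u 0 k| * (1 - \sum_j t j k) = 0.
    apply: (@psumr_eq0P _ _ predT (fun k => `|u 0 k| * (1 - \sum_j t j k))) => //.
    by apply/eqP; rewrite eq_le le0 sumr_ge0.
  by rewrite mulf_eq0 normr_eq0 subr_eq0 (gt_eqF (col_lt1 k)) orbF => /eqP.
pose v := \row_j c j *m invmx A.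
have vA : v *m A = \row_j c j by rewrite mulmxKV // unitmxE unitfE.
exists (fun j => v 0 j) => j.
have := congr1 (fun M : 'rV[R]_m => M 0 j) vA.
rewrite /A mulmxBr mulmx1 !mxE => <-.
have -> : \sum_k t j k * v 0 k = \sum_k v 0 k * (\matrix_(k, j) t j k) k j.
  by apply: eq_bigr => k _; rewrite mxE mulrC.
by rewrite subrK.
Qed.

End LinearSystems.

Lemma ler_min_div_convex (R : realFieldType) (c d1 d2 t d : R) :
  0 <= c -> 0 < d1 -> 0 < d2 -> 0 <= t <= 1 -> d = t * d1 + (1 - t) * d2 ->
  Num.min (c / d1) (c / d2) <= c / d.
Proof.
move=> c0 d1p d2p /andP[t0 t1] ->.
set z := t * d1 + (1 - t) * d2.
have div_le e : 0 < e -> 0 < z -> z <= e -> c / e <= c / z.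
  by move=> ep zp le_z; rewrite ler_wpM2l // lef_pV2 ?posrE.
have [d12|/ltW d21] := leP d1 d2.
  have : 0 <= (1 - t) * (d2 - d1) by rewrite mulr_ge0 // subr_ge0.
  have : 0 <= t * (d2 - d1) by rewrite mulr_ge0 // subr_ge0.
  by rewrite ge_min (div_le d2) ?orbT // /z; nra.
have : 0 <= (1 - t) * (d1 - d2) by rewrite mulr_ge0 // subr_ge0.
have : 0 <= t * (d1 - d2) by rewrite mulr_ge0 // subr_ge0.
by rewrite ge_min (div_le d1) // /z; nra.
Qed.

Section Equilibrium.
Variables (R : realType) (m L : nat) (sec : 'I_m.+1 -> 'I_L.+1)
  (a0 : 'I_m -> R) (b : 'I_m -> 'I_L.+1 -> R).
Hypotheses (Hsec : forall j : 'I_m.+1, (sec j == ord0) = (j == ord0))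
  (Ha0pos : forall j, 0 < a0 j) (Ha0sum : \sum_j a0 j = 1)
  (Hbge0 : forall i l, 0 <= b i l) (Hbsum : forall i, \sum_l b i l <= 1)
  (Hblab : forall i, 0 < b i ord0).

Lemma eps_ge0 i : 0 <= eps b i.
Proof. by rewrite /eps subr_ge0. Qed.

Lemma strat_labor i x : strat sec b i x -> x 0 ord0 = b i ord0.
Proof. by case=> _ H; rewrite -(H ord0) (big_pred1 ord0). Qed.

Lemma strat_convex i x y (t : R) : strat sec b i x -> strat sec b i y ->
  0 <= t -> t <= 1 -> strat sec b i (t *: x + (1 - t) *: y).
Proof.
move=> [x0 xs] [y0 ys] t0 t1; split.
  by move=> j; rewrite !mxE addr_ge0 // mulr_ge0 // subr_ge0.
move=> l; under eq_bigr => j _ do rewrite !mxE.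
by rewrite big_split /= -!mulr_sumr xs ys; ring.
Qed.

Lemma upd_admissible a i x : admissible sec b a -> strat sec b i x ->
  admissible sec b (upd a i x).
Proof. by move=> Ha Sx k; rewrite /upd; case: eqP => [->|_]. Qed.

Section Profile.
Variable a : 'I_m -> 'rV[R]_(m.+1).
Hypothesis Ha : admissible sec b a.

Lemma atil_ge0 k j : 0 <= atil a0 b a k j.
Proof.
rewrite /atil addr_ge0 //; first by case: (Ha j).
by rewrite mulr_ge0 ?eps_ge0 // ltW.
Qed.

Lemma atil_col_sum j : \sum_k atil a0 b a k j = 1 - b j ord0.
Proof.
have row_sum : \sum_(k : 'I_m.+1) a j 0 k = \sum_l b j l.
  rewrite (partition_big sec predT) //=; apply: eq_bigr => l _.
  by case: (Ha j) => _ ->.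
rewrite /atil big_split /= -mulr_sumr Ha0sum mulr1 /eps -row_sum big_ord_recl.
by rewrite (strat_labor (Ha j)); ring.
Qed.

Lemma Dlen_ge0 j i n : 0 <= Dlen a0 b a j i n.
Proof. by apply: sumr_ge0 => w _; apply: prodr_ge0 => t _; apply: atil_ge0. Qed.

Lemma Dlen_partial_sum_le i N j : \sum_(n < N) Dlen a0 b a j i n <= 1 - b j ord0.
Proof.
elim: N j => [|N IH] j.
  by rewrite big_ord0 subr_ge0 (le_trans _ (Hbsum j)) // (bigD1 ord0) //= lerDl sumr_ge0.
rewrite big_ord_recl Dlen0.
under eq_bigr => n _ do rewrite lift0 DlenS.
rewrite exchange_big /=.
under eq_bigr => k _ do rewrite -mulr_sumr.
rewrite -atil_col_sum [X in _ <= X](bigD1 i) //= lerD2l.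
apply: ler_sum => k _; apply: ler_piMr; first exact: atil_ge0.
by apply: le_trans (IH k) _; rewrite lerBlDr lerDl ltW.
Qed.

Local Open Scope ereal_scope.

Lemma D_ge0 j i : 0 <= D a0 b a j i.
Proof. by apply: nneseries_ge0 => n _ _; rewrite lee_fin Dlen_ge0. Qed.

Lemma D_le j i : D a0 b a j i <= (1 - b j ord0)%:E.
Proof.
apply: lime_le.
  by apply: is_cvg_nneseries => n _ _; rewrite lee_fin Dlen_ge0.
by apply: nearW => N; rewrite sumEFin lee_fin big_mkord Dlen_partial_sum_le.
Qed.

Lemma D_lt1 i : D a0 b a i i < 1%:E.
Proof. by rewrite (le_lt_trans (D_le i i)) // lte_fin gtrBl Hblab. Qed.

Lemma D_fineK j i : (fine (D a0 b a j i))%:E = D a0 b a j i.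
Proof.
by rewrite fineK // ge0_fin_numE ?D_ge0 // (le_lt_trans (D_le j i)) ?ltry.
Qed.

Lemma D_rec j i : D a0 b a j i = (atil a0 b a i j)%:E +
  \sum_(k | k != i) (atil a0 b a k j)%:E * D a0 b a k i.
Proof.
have Dlen_ge0E n : 0 <= (Dlen a0 b a j i n)%:E by rewrite lee_fin Dlen_ge0.
rewrite /D nneseries_recl // Dlen0; congr (_ + _).
rewrite -nneseries_addn //.
under eq_eseriesr => n _ do rewrite addn1 DlenS -sumEFin.
rewrite nneseries_sum; last by move=> k n _; rewrite lee_fin mulr_ge0 ?atil_ge0 ?Dlen_ge0.
apply: eq_bigr => k _; under eq_eseriesr => n _ do rewrite EFinM.
by rewrite nneseriesZl // => n _; rewrite lee_fin Dlen_ge0.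
Qed.

Local Close Scope ereal_scope.

Lemma fineD_rec j i : fine (D a0 b a j i) = atil a0 b a i j +
  \sum_(k | k != i) atil a0 b a k j * fine (D a0 b a k i).
Proof.
apply: EFin_inj; rewrite D_fineK D_rec [in RHS]EFinD -sumEFin.
by congr (_ + _)%E; apply: eq_bigr => k _; rewrite EFinM D_fineK.
Qed.

Lemma fineD_ge0 j i : 0 <= fine (D a0 b a j i).
Proof. by rewrite -lee_fin D_fineK D_ge0. Qed.

Lemma fineD_lt1 i : fine (D a0 b a i i) < 1.
Proof. by rewrite -lte_fin D_fineK D_lt1. Qed.

(* Summing the recursion over j, the column sums 1 - b_{k,0} turn it into the
   normalization sum_k a_{k,0} v_k = 1. *)
Lemma eq_valuesP v :
  eq_values a0 b a v <-> forall j, v j = a0 j + \sum_k atil a0 b a j k * v k.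
Proof.
have atil_sum j : \sum_k atil a0 b a j k * v k =
    a0 j * (\sum_k eps b k * v k) + \sum_k a k 0 (firm j) * v k.
  by rewrite /atil mulr_sumr -big_split /=; apply: eq_bigr => k _; ring.
split=> [[hv _] j|hv]; first by rewrite atil_sum addrA -hv.
split=> [j|]; first by rewrite -addrA -atil_sum -hv.
have total : \sum_j v j = 1 + \sum_k v k * (1 - b k ord0).
  under [in RHS]eq_bigr => k _ do rewrite -atil_col_sum mulr_sumr.
  rewrite -{1}Ha0sum exchange_big -big_split /=; apply: eq_bigr => j _.
  by rewrite [LHS]hv; congr (_ + _); apply: eq_bigr => k _; ring.
have labor : \sum_k v k * (1 - b k ord0) = \sum_k v k - \sum_k b k ord0 * v k.
  by rewrite -sumrB; apply: eq_bigr => k _; ring.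
under eq_bigr => k _ do rewrite (strat_labor (Ha k)).
by move: total; rewrite labor; lra.
Qed.

Lemma vbar_rec j : vbar a0 b a j = a0 j + \sum_k atil a0 b a j k * vbar a0 b a k.
Proof.
have col_lt1 k : \sum_j atil a0 b a j k < 1.
  by rewrite atil_col_sum; have := Hblab k; lra.
have [v hv] := substochastic_fixpoint a0 atil_ge0 col_lt1.
have : eq_values a0 b a (vbar a0 b a).
  by apply: epsilon_spec; exists v; apply/eq_valuesP.
by move/eq_valuesP; apply.
Qed.

Lemma profit_formula i :
  profit a0 b a i = eps b i * (a0 i + \sum_(j | j != i) a0 j * fine (D a0 b a j i))
    / (1 - atil a0 b a i i - \sum_(k | k != i) atil a0 b a k i * fine (D a0 b a k i)).
Proof.
have -> : 1 - atil a0 b a i i - \sum_(k | k != i) atil a0 b a k i * fine (D a0 b a k i)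
    = 1 - fine (D a0 b a i i) by rewrite [in RHS]fineD_rec; ring.
rewrite -(first_passage_elimination vbar_rec (fun j => fineD_rec j i)) /profit.
by field; rewrite subr_eq0 gt_eqF ?fineD_lt1.
Qed.

End Profile.

Lemma atil_upd a i x k j : j != i -> atil a0 b (upd a i x) k j = atil a0 b a k j.
Proof. by move=> ji; rewrite /atil /upd (negbTE ji). Qed.

Lemma atil_upd_self a i x k : atil a0 b (upd a i x) k i = x 0 (firm k) + eps b i * a0 k.
Proof. by rewrite /atil /upd eqxx. Qed.

Lemma Dlen_upd a i x j n : j != i -> Dlen a0 b (upd a i x) j i n = Dlen a0 b a j i n.
Proof.
elim: n j => [|n IH] j ji; first by rewrite !Dlen0 atil_upd.
by rewrite !DlenS; apply: eq_bigr => k ki; rewrite atil_upd // IH.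
Qed.

Lemma D_upd a i x j : j != i -> D a0 b (upd a i x) j i = D a0 b a j i.
Proof. by move=> ji; apply: eq_eseriesr => n _; rewrite Dlen_upd. Qed.

Section BestResponse.
Variables (a : 'I_m -> 'rV[R]_(m.+1)) (i : 'I_m).
Hypothesis Ha : admissible sec b a.

Let dd k := fine (D a0 b a k i).

Definition profit_num := eps b i * (a0 i + \sum_(j | j != i) a0 j * dd j).

Definition profit_den (x : 'rV[R]_(m.+1)) := 1 - (x 0 (firm i) + eps b i * a0 i)
  - \sum_(k | k != i) (x 0 (firm k) + eps b i * a0 k) * dd k.

Lemma profit_upd x :
  strat sec b i x -> profit a0 b (upd a i x) i = profit_num / profit_den x.
Proof.
move=> Sx; rewrite profit_formula; last exact: upd_admissible.
rewrite /profit_num /profit_den /dd !atil_upd_self; congr (_ * (_ + _) / (_ - _)).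
  by apply: eq_bigr => j ji; rewrite D_upd.
by apply: eq_bigr => j ji; rewrite D_upd // atil_upd_self.
Qed.

Lemma profit_num_ge0 : 0 <= profit_num.
Proof.
rewrite mulr_ge0 ?eps_ge0 // addr_ge0 ?(ltW (Ha0pos i)) //.
by apply: sumr_ge0 => j _; rewrite mulr_ge0 ?(ltW (Ha0pos j)) ?fineD_ge0.
Qed.

Lemma profit_den_gt0 x : strat sec b i x -> 0 < profit_den x.
Proof.
move=> Sx; have Hu := upd_admissible Ha Sx.
have := fineD_lt1 Hu i; rewrite (fineD_rec Hu i i) atil_upd_self.
have -> : \sum_(k | k != i) atil a0 b (upd a i x) k i * fine (D a0 b (upd a i x) k i)
    = \sum_(k | k != i) (x 0 (firm k) + eps b i * a0 k) * dd k.
  by apply: eq_bigr => k ki; rewrite atil_upd_self D_upd.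
by rewrite /profit_den; lra.
Qed.

Lemma profit_den_convex x y (t : R) :
  profit_den (t *: x + (1 - t) *: y) = t * profit_den x + (1 - t) * profit_den y.
Proof.
rewrite /profit_den !mxE.
have -> : \sum_(k | k != i) ((t *: x + (1 - t) *: y) 0 (firm k) + eps b i * a0 k) * dd k
    = t * \sum_(k | k != i) (x 0 (firm k) + eps b i * a0 k) * dd k
      + (1 - t) * \sum_(k | k != i) (y 0 (firm k) + eps b i * a0 k) * dd k.
  by rewrite !mulr_sumr -big_split; apply: eq_bigr => k _ /=; rewrite !mxE; ring.
ring.
Qed.

Lemma profit_den_continuous : continuous profit_den.
Proof.
have coord_aff k : continuous (fun y : 'rV[R]_(m.+1) => y 0 (firm k) + eps b i * a0 k).
  move=> y; apply: continuousD (@coord_continuous R 1 m.+1 0 (firm k) y) _.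
  exact: cst_continuous.
have sum_cont : continuous (fun y : 'rV[R]_(m.+1) =>
    \sum_(k | k != i) (y 0 (firm k) + eps b i * a0 k) * dd k).
  apply: (@continuous_big _ _ +%R 0 _ add_continuous) => k _ z.
  by apply: continuousM (coord_aff k z) _; exact: cst_continuous.
move=> y; apply: continuousB (sum_cont y); apply: continuousB (coord_aff i y).
exact: cst_continuous.
Qed.

Local Open Scope classical_set_scope.

Lemma profit_upd_continuous :
  {within strat sec b i, continuous (fun x => profit a0 b (upd a i x) i)}.
Proof.
apply: (@subspace_eq_continuous _ _ _
  (from_subspace (strat sec b i) (fun x => profit_num / profit_den x))).
  by move=> x /set_mem Sx; rewrite /from_subspace profit_upd.
apply: continuous_in_subspaceT => x /set_mem Sx.
have den_neq0 : profit_den x != 0 by rewrite gt_eqF ?profit_den_gt0.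
exact (continuousM (@cst_continuous _ _ profit_num x)
                   (continuousV den_neq0 (@profit_den_continuous x))).
Qed.

Lemma profit_upd_quasi_concave :
  quasi_concave_on (strat sec b i) (fun x => profit a0 b (upd a i x) i).
Proof.
move=> x y t Sx Sy t0 t1.
have Sz := strat_convex Sx Sy t0 t1.
rewrite !profit_upd //; apply: (ler_min_div_convex (t := t)).
- exact: profit_num_ge0.
- exact: profit_den_gt0.
- exact: profit_den_gt0.
- by rewrite t0 t1.
- exact: profit_den_convex.
Qed.

End BestResponse.

End Equilibrium.

Theorem mainTheorem7 (R : realType) (m L : nat) (sec : 'I_m.+1 -> 'I_L.+1)
    (a0 : 'I_m -> R) (b : 'I_m -> 'I_L.+1 -> R)
    (Hsec : forall j : 'I_m.+1, (sec j == ord0) = (j == ord0))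
    (Ha0pos : forall j, 0 < a0 j) (Ha0sum : \sum_j a0 j = 1)
    (Hbge0 : forall i l, 0 <= b i l) (Hbsum : forall i, \sum_l b i l <= 1)
    (Hblab : forall i, 0 < b i ord0)
    (Hnonlab : exists i l, l != ord0 /\ 0 < b i l)
    (i : 'I_m) (a : 'I_m -> 'rV[R]_(m.+1)) (Ha : admissible sec b a) :
  (forall x, strat sec b i x -> forall j, j != i ->
      D a0 b (upd a i x) j i = D a0 b a j i) /\
  (D a0 b a i i = ((atil a0 b a i i)%:E
                   + \sum_(k | k != i) (atil a0 b a k i)%:E * D a0 b a k i)%E
   /\ (D a0 b a i i < 1%:E)%E) /\
  profit a0 b a i =
    eps b i * (a0 i + \sum_(j | j != i) a0 j * fine (D a0 b a j i))
    / (1 - atil a0 b a i i - \sum_(k | k != i) atil a0 b a k i * fine (D a0 b a k i)) /\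
  {within strat sec b i, continuous (fun x => profit a0 b (upd a i x) i)}%classic /\
  quasi_concave_on (strat sec b i) (fun x => profit a0 b (upd a i x) i).
Proof.
split; first by move=> x _ j; apply: D_upd.
split; first split.
- exact: D_rec.
- exact: D_lt1.
split; first exact: profit_formula.
split; [exact: profit_upd_continuous | exact: profit_upd_quasi_concave].
Qed.
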